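(* Let $R$ be a ring and let $C_\infty$ be the connected component of the point $R(1,0)$ in the distant graph of $\mathbb{P}(R)$. Then the stabilizer of $C_\infty$ in $\mathrm{GL}_2(R)$ (i.e. the set of $G\in\mathrm{GL}_2(R)$ with $C_\infty^G=C_\infty$) equals $\mathrm{GE}_2(R)$.
   Context: $R$ is an associative ring with unit element $1$ (the case $1=0$ is allowed); $R^*$ denotes its group of units and $\mathrm{GL}_2(R)$ the group of invertible $2\times2$ matrices over $R$. A pair $(a,b)\in R^2$ is admissible if it is the first row of some matrix in $\mathrm{GL}_2(R)$. The projective line $\mathbb{P}(R)$ is the set of all cyclic submodules $R(a,b)=\{(ra,rb):r\in R\}$ of the left $R$-module $R^2$ with $(a,b)$ admissible; points are always represented by admissible pairs, and two admissible pairs represent the same point iff one is obtained from the other by left multiplication with a unit. $\mathrm{GL}_2(R)$ acts on $\mathbb{P}(R)$ by $R(a,b)\mapsto R((a,b)G)$. Two points $R(a,b)$, $R(c,d)$ are distant iff $\begin{pmatrix}a&b\\c&d\end{pmatrix}\in\mathrm{GL}_2(R)$. The distant graph has vertex set $\mathbb{P}(R)$ and edges the unordered pairs of distant points; connected components refer to this graph. The elementary matrices are $B_{12}(t)=\begin{pmatrix}1&t\\0&1\end{pmatrix}$ and $B_{21}(t)=\begin{pmatrix}1&0\\t&1\end{pmatrix}$ ($t\in R$); $\mathrm{E}_2(R)$ is the subgroup they generate, and $\mathrm{GE}_2(R)$ is the subgroup of $\mathrm{GL}_2(R)$ generated by $\mathrm{E}_2(R)$ together with all invertible diagonal matrices.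 *)

(* R is an arbitrary associative ring with 1, possibly 1 = 0
   (hence pzRingType). *)
From HB Require Import structures.
From mathcomp Require Import all_boot all_order all_algebra.
From Stdlib Require Import Relations.
Set Implicit Arguments. Unset Strict Implicit. Unset Printing Implicit Defensive.
Import GRing.Theory.
Local Open Scope ring_scope.

Section ProjLine.
Variable R : pzRingType.

Definition mx2 (a b c d : R) : 'M[R]_2 :=
  \matrix_(i < 2, j < 2)
    if (i == 0 :> nat) then (if (j == 0 :> nat) then a else b)
    else (if (j == 0 :> nat) then c else d).

Definition isUnit (u : R) : Prop := exists v, u * v = 1 /\ v * u = 1.

Definition GL2 (G : 'M[R]_2) : Prop :=
  exists H : 'M[R]_2, G *m H = 1%:M /\ H *m G = 1%:M.

Definition admissible (p : R * R) : Prop :=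
  exists c d, GL2 (mx2 p.1 p.2 c d).

Definition cyc (p : R * R) (x : R * R) : Prop :=
  exists r, x = (r * p.1, r * p.2).

(* two admissible pairs represent the same point iff the submodules agree *)
Definition samepoint (p q : R * R) : Prop := forall x, cyc p x <-> cyc q x.

Definition distant (p q : R * R) : Prop := GL2 (mx2 p.1 p.2 q.1 q.2).

(* one step in the distant graph, taken on representatives (also allowing
   a change of representative of the same point) *)
Definition dstep (p q : R * R) : Prop :=
  distant p q \/ (admissible p /\ admissible q /\ samepoint p q).

Definition Cinf (p : R * R) : Prop :=
  admissible p /\ clos_refl_trans (R * R) dstep (1, 0) p.

Definition act (p : R * R) (G : 'M[R]_2) : R * R :=
  (p.1 * G 0 0 + p.2 * G 1 0, p.1 * G 0 1 + p.2 * G 1 1).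

(* C_inf^G = C_inf as sets of points *)
Definition stabilizes_Cinf (G : 'M[R]_2) : Prop :=
  forall q, admissible q ->
    ((exists p, Cinf p /\ samepoint (act p G) q) <-> Cinf q).

Definition B12 (t : R) : 'M[R]_2 := mx2 1 t 0 1.
Definition B21 (t : R) : 'M[R]_2 := mx2 1 0 t 1.

Inductive GE2 : 'M[R]_2 -> Prop :=
| GE2_B12 t : GE2 (B12 t)
| GE2_B21 t : GE2 (B21 t)
| GE2_diag u v : isUnit u -> isUnit v -> GE2 (mx2 u 0 0 v)
| GE2_mul G H : GE2 G -> GE2 H -> GE2 (G *m H)
| GE2_inv G H : GE2 G -> G *m H = 1%:M -> H *m G = 1%:M -> GE2 H.

End ProjLine.

From HB Require Import structures.
From mathcomp Require Import all_boot all_order all_algebra.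
From Stdlib Require Import Relations.
Set Implicit Arguments. Unset Strict Implicit. Unset Printing Implicit Defensive.
Import GRing.Theory.
Local Open Scope ring_scope.

(* GL_2(R) acts on admissible pairs by right multiplication and preserves
   admissibility, distance and "same point"; hence it maps distant-graph paths
   to paths, and an invertible G maps C into C as soon as (1,0)G lies in C.

   GE_2 <= Stab: every generator of GE_2 sends (1,0) into C, so the invertible
   matrices which, together with their inverse, map C into C form a subgroup
   containing the generators; such matrices stabilize C.

   Stab <= GE_2: C is contained in the GE_2-orbit of (1,0), since moving along
   an edge of the distant graph stays in that orbit (after translating by an
   element of GE_2 the edge starts at (1,0), and the rows distant from (1,0)
   are the second rows of invertible lower triangular matrices, which lie in
   GE_2).  If G stabilizes C, then (1,0)G = (1,0)E with E in GE_2, so G E^-1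
   fixes (1,0); it is invertible and lower triangular, hence in GE_2. *)

Section ProjectiveLineStabilizer.
Variable R : pzRingType.
Implicit Types (a b c d t u : R) (p q : R * R) (G H E M : 'M[R]_2).

Lemma mx2E a b c d (i j : 'I_2) : mx2 a b c d i j =
  if (i == 0 :> nat) then (if (j == 0 :> nat) then a else b)
  else (if (j == 0 :> nat) then c else d).
Proof. by rewrite mxE. Qed.

Lemma mulmx2E G H i j : (G *m H) i j = G i 0 * H 0 j + G i 1 * H 1 j.
Proof.
rewrite mxE !big_ord_recr big_ord0 /= add0r.
by congr (G i _ * H _ j + G i _ * H _ j); apply: val_inj.
Qed.

Lemma mx2_eta G : G = mx2 (G 0 0) (G 0 1) (G 1 0) (G 1 1).
Proof.
apply/matrixP=> i j; rewrite mx2E.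
by case: i => [[|[|i]] Hi] //; case: j => [[|[|j]] Hj] //=;
  congr (G _ _); apply: val_inj.
Qed.

Lemma mx2_mul a b c d a' b' c' d' :
  mx2 a b c d *m mx2 a' b' c' d' =
  mx2 (a * a' + b * c') (a * b' + b * d') (c * a' + d * c') (c * b' + d * d').
Proof.
apply/matrixP=> i j; rewrite mulmx2E !mx2E /=.
by case: i => [[|[|i]] Hi] //; case: j => [[|[|j]] Hj].
Qed.

Lemma mx2_1 : mx2 1 0 0 1 = 1%:M :> 'M[R]_2.
Proof.
apply/matrixP=> i j; rewrite mx2E mxE.
by case: i => [[|[|i]] Hi] //; case: j => [[|[|j]] Hj].
Qed.

Ltac mx2_simpl := rewrite ?mx2_mul ?mul1r ?mulr1 ?mul0r ?mulr0 ?addr0 ?add0r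
  ?subrr ?addNr ?mulrN ?mulNr ?mx2_1.

Lemma inv_uniq G H K : G *m H = 1%:M -> K *m G = 1%:M -> K = H.
Proof. by move=> GH KG; rewrite -[K]mulmx1 -GH mulmxA KG mul1mx. Qed.

Lemma GL2_mul G H : GL2 G -> GL2 H -> GL2 (G *m H).
Proof.
move=> [G' [G1 G2]] [H' [H1 H2]]; exists (H' *m G'); split.
  by rewrite mulmxA -(mulmxA G) H1 mulmx1.
by rewrite mulmxA -(mulmxA H') G2 mulmx1.
Qed.

Lemma B12N t : B12 t *m B12 (- t) = 1%:M.
Proof. by rewrite /B12; mx2_simpl. Qed.

Lemma B21N t : B21 t *m B21 (- t) = 1%:M.
Proof. by rewrite /B21; mx2_simpl. Qed.

Lemma GL2_B12 t : GL2 (B12 t).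
Proof. by exists (B12 (- t)); rewrite B12N -{2}[t]opprK B12N. Qed.

Lemma GL2_B21 t : GL2 (B21 t).
Proof. by exists (B21 (- t)); rewrite B21N -{2}[t]opprK B21N. Qed.

Lemma diag_mulV u v u' v' : u * u' = 1 -> v * v' = 1 ->
  mx2 u 0 0 v *m mx2 u' 0 0 v' = 1%:M.
Proof. by move=> Hu Hv; mx2_simpl; rewrite Hu Hv mx2_1. Qed.

Lemma diag_inv u v : isUnit u -> isUnit v ->
  exists2 u', isUnit u' & exists2 v', isUnit v' &
    mx2 u 0 0 v *m mx2 u' 0 0 v' = 1%:M /\ mx2 u' 0 0 v' *m mx2 u 0 0 v = 1%:M.
Proof.
move=> [u' [U1 U2]] [v' [V1 V2]].
exists u'; first by exists u. exists v'; first by exists v.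
by rewrite !diag_mulV.
Qed.

Lemma lower_unit c d : GL2 (mx2 1 0 c d) -> isUnit d.
Proof.
case=> H [MH HM].
have e1 := congr1 (fun M : 'M[R]_2 => M 0 1) MH.
have e2 := congr1 (fun M : 'M[R]_2 => M 1 1) MH.
have e3 := congr1 (fun M : 'M[R]_2 => M 1 1) HM.
move: e1 e2 e3; rewrite !mulmx2E !mx2E !mxE /= !mul1r !mul0r !mulr0 !addr0.
move=> H01; rewrite H01 mulr0 !add0r => e2 e3.
by exists (H 1 1).
Qed.

Lemma GE2_GL2 G : GE2 G -> GL2 G.
Proof.
elim=> {G} [t|t|u v Hu Hv|G H _ IG _ IH|G H _ _ GH HG].
- exact: GL2_B12.
- exact: GL2_B21.
- by have [u' _ [v' _ []]] := diag_inv Hu Hv; exists (mx2 u' 0 0 v').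
- exact: GL2_mul.
- by exists G.
Qed.

Lemma GE2_invertible E : GE2 E ->
  exists E', [/\ GE2 E', E *m E' = 1%:M & E' *m E = 1%:M].
Proof.
by move=> GE; have [E' [A B]] := GE2_GL2 GE; exists E'; split => //;
  apply: GE2_inv A B.
Qed.

(* An invertible [[1, 0], [c, d]] equals B21(c) diag(1, d), hence lies in GE_2. *)
Lemma lower_GE2 c d : GL2 (mx2 1 0 c d) -> GE2 (mx2 1 0 c d).
Proof.
move=> /lower_unit Ud.
have -> : mx2 1 0 c d = B21 c *m mx2 1 0 0 d by rewrite /B21; mx2_simpl.
apply: GE2_mul; first exact: GE2_B21.
by apply: GE2_diag => //; exists 1; rewrite mulr1.
Qed.

Lemma act_mul p G H : act (act p G) H = act p (G *m H).
Proof.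
by rewrite /act !mulmx2E /=; congr (_, _); rewrite !mulrDl !mulrDr !mulrA addrACA.
Qed.

Lemma act_1 p : act p 1%:M = p.
Proof. by case: p => a b; rewrite /act !mxE /= !mulr1 !mulr0 addr0 add0r. Qed.

Lemma act10 E : act (1, 0) E = (E 0 0, E 0 1).
Proof. by rewrite /act /= !mul1r !mul0r !addr0. Qed.

Lemma act01_mx2 a b c d : act (0, 1) (mx2 a b c d) = (c, d).
Proof. by rewrite /act !mx2E /= !mul1r !mul0r !add0r. Qed.

Lemma act_scale r p G :
  act (r * p.1, r * p.2) G = (r * (act p G).1, r * (act p G).2).
Proof. by rewrite /act /= !mulrDr !mulrA. Qed.

Lemma mx2_act p q G :
  mx2 p.1 p.2 q.1 q.2 *m G = mx2 (act p G).1 (act p G).2 (act q G).1 (act q G).2.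
Proof. by rewrite {1}(mx2_eta G) mx2_mul. Qed.

Lemma admissible_act p G : GL2 G -> admissible p -> admissible (act p G).
Proof.
move=> HG [c [d Hp]]; exists (act (c, d) G).1, (act (c, d) G).2.
by rewrite -[act p G]/(_, _) -mx2_act; apply: GL2_mul.
Qed.

Lemma distant_act p q G : GL2 G -> distant p q -> distant (act p G) (act q G).
Proof. by move=> HG Hpq; rewrite /distant -mx2_act; apply: GL2_mul. Qed.

Lemma cyc_act p x G : cyc (act p G) x <-> exists y, cyc p y /\ x = act y G.
Proof.
split; first by case=> r ->; exists (r * p.1, r * p.2); rewrite act_scale;
  split => //; exists r.
by case=> y [[r ->] ->]; exists r; rewrite act_scale.
Qed.

Lemma samepoint_act p q G : samepoint p q -> samepoint (act p G) (act q G).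
Proof.
by move=> H x; split => /cyc_act [y [Hy ->]]; apply/cyc_act; exists y;
  split => //; apply/H.
Qed.

Lemma dstep_act p q G : GL2 G -> dstep p q -> dstep (act p G) (act q G).
Proof.
move=> HG [D|[Ap [Aq S]]]; [left; exact: distant_act|right].
by split; [|split]; [apply: admissible_act..|apply: samepoint_act].
Qed.

Lemma path_act p q G : GL2 G ->
  clos_refl_trans _ (@dstep R) p q ->
  clos_refl_trans _ (@dstep R) (act p G) (act q G).
Proof.
move=> HG; elim=> [x y Hxy|x|x y z _ IH1 _ IH2].
- by apply: rt_step; apply: dstep_act.
- exact: rt_refl.
- exact: rt_trans IH1 IH2.
Qed.

Lemma distant_adm p q : distant p q -> admissible p /\ admissible q.
Proof.
move=> H; split; first by exists q.1, q.2.
exists p.1, p.2.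
have -> : mx2 q.1 q.2 p.1 p.2 = mx2 0 1 1 0 *m mx2 p.1 p.2 q.1 q.2.
  by mx2_simpl.
by apply: GL2_mul => //; exists (mx2 0 1 1 0); mx2_simpl.
Qed.

(* Two admissible representatives of the same point differ by a unit: an
   admissible pair (a,b) is unimodular, so z(a,b) = (a,b) forces z = 1. *)

Lemma admissible_fix p z : admissible p -> z * p.1 = p.1 -> z * p.2 = p.2 -> z = 1.
Proof.
case=> c [d [H [MH _]]] E1 E2.
have F : p.1 * H 0 0 + p.2 * H 1 0 = 1.
  by have := congr1 (fun M : 'M[R]_2 => M 0 0) MH; rewrite mulmx2E !mx2E mxE.
by rewrite -[z]mulr1 -F mulrDr !mulrA E1 E2.
Qed.

Lemma samepoint_unit p q : admissible p -> admissible q -> samepoint p q ->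
  exists u, isUnit u /\ q = (u * p.1, u * p.2).
Proof.
move=> Ap Aq S.
have [r Hr] : cyc q p by apply/S; exists 1; rewrite !mul1r -surjective_pairing.
have [s Hs] : cyc p q by apply/S; exists 1; rewrite !mul1r -surjective_pairing.
exists s; split => //; exists r.
move: Ap Aq Hr Hs {S}; case: p => a b; case: q => c' d' /= Ap Aq [Ea Eb] [Ec Ed].
split; first by apply: (admissible_fix Aq); rewrite /= -mulrA -?Ea -?Eb.
by apply: (admissible_fix Ap); rewrite /= -mulrA -?Ec -?Ed.
Qed.

Lemma Cinf10 : Cinf (1 : R, 0 : R).
Proof.
split; last exact: rt_refl.
by exists 0, 1; rewrite mx2_1; exists 1%:M; rewrite mulmx1.
Qed.

(* Every point distant from R(0,1) is two steps away from R(1,0). *)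
Lemma Cinf_from01 p : distant (0, 1) p -> Cinf p.
Proof.
move=> D; split; first exact: (distant_adm D).2.
apply: rt_trans (rt_step _ _ _ _ (or_introl D)).
by apply: rt_step; left; rewrite /distant /= mx2_1; exists 1%:M; rewrite mulmx1.
Qed.

Definition preserves G : Prop := forall p, Cinf p -> Cinf (act p G).

(* Since C_inf is the component of (1,0), it suffices to check this point. *)
Lemma preservesP G : GL2 G -> Cinf (act (1, 0) G) -> preserves G.
Proof.
move=> HG [_ H0] p [Ap Hp]; split; first exact: admissible_act.
exact: rt_trans H0 (path_act HG Hp).
Qed.

Lemma preserves_mul G H : preserves G -> preserves H -> preserves (G *m H).
Proof. by move=> PG PH p Cp; rewrite -act_mul; apply/PH/PG. Qed.

Lemma preserves_B12 t : preserves (B12 t).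
Proof.
apply: preservesP; first exact: GL2_B12.
rewrite act10 /B12 !mx2E /=; apply: Cinf_from01.
by exists (mx2 (- t) 1 1 0) => /=; mx2_simpl.
Qed.

Lemma preserves_B21 t : preserves (B21 t).
Proof.
by apply: preservesP; [exact: GL2_B21|rewrite act10 /B21 !mx2E; exact: Cinf10].
Qed.

Lemma preserves_diag u v : isUnit u -> isUnit v -> preserves (mx2 u 0 0 v).
Proof.
move=> Hu Hv; apply: preservesP; first exact/GE2_GL2/GE2_diag.
rewrite act10 !mx2E /=; apply: Cinf_from01.
have [u' [U1 U2]] := Hu.
by exists (mx2 0 u' 1 0) => /=; mx2_simpl; rewrite U1 U2 mx2_1.
Qed.

(* Invertible matrices which, together with their inverse, map C_inf into
   itself; they form a subgroup containing the generators of GE_2. *)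
Definition bipreserves G : Prop :=
  exists H, [/\ G *m H = 1%:M, H *m G = 1%:M, preserves G & preserves H].

Lemma bipreserves_mul G H : bipreserves G -> bipreserves H -> bipreserves (G *m H).
Proof.
move=> [G' [G1 G2 PG PG']] [H' [H1 H2 PH PH']]; exists (H' *m G'); split.
- by rewrite mulmxA -(mulmxA G) H1 mulmx1.
- by rewrite mulmxA -(mulmxA H') G2 mulmx1.
- exact: preserves_mul.
- exact: preserves_mul.
Qed.

Lemma bipreserves_inv G H : bipreserves G ->
  G *m H = 1%:M -> H *m G = 1%:M -> bipreserves H.
Proof.
move=> [G' [G1 G2 PG PG']] _ HG; exists G.
by rewrite (inv_uniq G1 HG).
Qed.

Lemma GE2_bipreserves G : GE2 G -> bipreserves G.
Proof.
elim=> {G} [t|t|u v Hu Hv|G H _ IG _ IH|G H _ IG GH HG].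
- exists (B12 (- t)); rewrite B12N -{2}[t]opprK B12N.
  by split => //; apply: preserves_B12.
- exists (B21 (- t)); rewrite B21N -{2}[t]opprK B21N.
  by split => //; apply: preserves_B21.
- have [u' Hu' [v' Hv' [UV VU]]] := diag_inv Hu Hv.
  by exists (mx2 u' 0 0 v'); split => //; apply: preserves_diag.
- exact: bipreserves_mul.
- exact: bipreserves_inv GH HG.
Qed.

Lemma GE2_stabilizes G : GE2 G -> stabilizes_Cinf G.
Proof.
move=> /GE2_bipreserves [H [GH HG PG PH]] q Aq; split.
  case=> p [Cp Sq]; have [Ap Rp] := PG p Cp; split => //.
  by apply: rt_trans Rp (rt_step _ _ _ _ _); right; split.
by move=> Cq; exists (act q H); rewrite act_mul HG act_1; split => //; apply: PH.
Qed.

Definition GE2_orbit p : Prop := exists2 E, GE2 E & p = act (1, 0) E.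

Lemma GE2_orbit_act p F : GE2_orbit p -> GE2 F -> GE2_orbit (act p F).
Proof. by move=> [E GE ->] GF; exists (E *m F); [apply: GE2_mul|rewrite act_mul]. Qed.

(* (0,1) = (1,0) B12(1) B21(-1) B12(1). *)
Lemma GE2_orbit01 : GE2_orbit (0, 1).
Proof.
exists (B12 1 *m B21 (- 1) *m B12 1); first by apply: GE2_mul; [apply: GE2_mul|]; constructor.
by rewrite act10 /B12 /B21; mx2_simpl; rewrite !mx2E /= add0r.
Qed.

Lemma GE2_orbit_scale p u : isUnit u -> GE2_orbit p -> GE2_orbit (u * p.1, u * p.2).
Proof.
move=> Hu [E GE ->]; exists (mx2 u 0 0 1 *m E).
  by apply: GE2_mul => //; apply: GE2_diag => //; exists 1; rewrite mulr1.
by rewrite -act_mul [act (1, 0) (mx2 _ _ _ _)]act10 !mx2E /act /= !mul0r !addr0 !mul1r.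
Qed.

Lemma GE2_orbit_step p q : GE2_orbit p -> dstep p q -> GE2_orbit q.
Proof.
move=> Op [D|[Ap [Aq SP]]]; last first.
  by have [u [Hu ->]] := samepoint_unit Ap Aq SP; apply: GE2_orbit_scale.
have [E GE Ep] := Op; have [E' [GE' EE' E'E]] := GE2_invertible GE.
have Hp : act p E' = (1, 0) by rewrite Ep act_mul EE' act_1.
have L : GL2 (mx2 1 0 (act q E').1 (act q E').2).
  by rewrite -[1]/((1, 0) : R * R).1 -[0]/((1, 0) : R * R).2 -{1 2}Hp -mx2_act;
    apply: GL2_mul => //; exact: GE2_GL2.
have Or : GE2_orbit (act q E').
  have := GE2_orbit_act GE2_orbit01 (lower_GE2 L).
  by rewrite act01_mx2 -surjective_pairing.
by have := GE2_orbit_act Or GE; rewrite act_mul E'E act_1.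
Qed.

Lemma Cinf_GE2_orbit p : Cinf p -> GE2_orbit p.
Proof.
case=> _ Hp; elim: (clos_rt_rtn1 _ _ _ _ Hp) => [|y z Hyz _ IH];
  last exact: GE2_orbit_step IH Hyz.
by exists 1%:M; [rewrite -mx2_1; exact: (GE2_B12 0)|rewrite act_1].
Qed.

Lemma stabilizes_GE2 G : GL2 G -> stabilizes_Cinf G -> GE2 G.
Proof.
move=> HG St.
have Cq : Cinf (act (1, 0) G).
  apply/St; first by apply: admissible_act => //; case: Cinf10.
  by exists (1, 0); split; [exact: Cinf10|].
have [E GE Eq] := Cinf_GE2_orbit Cq.
have [E' [GE' EE' E'E]] := GE2_invertible GE.
set M := G *m E'.
have : act (1, 0) M = (1, 0) by rewrite -act_mul Eq act_mul EE' act_1.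
rewrite act10 => -[M00 M01].
have Mlow : M = mx2 1 0 (M 1 0) (M 1 1) by rewrite {1}(mx2_eta M) M00 M01.
have GM : GE2 M.
  rewrite Mlow; apply: lower_GE2; rewrite -Mlow.
  by apply: GL2_mul => //; exact: GE2_GL2.
have -> : G = M *m E by rewrite -mulmxA E'E mulmx1.
exact: GE2_mul.
Qed.

End ProjectiveLineStabilizer.

Theorem mainTheorem3 (R : pzRingType) (G : 'M[R]_2) :
  (GL2 G /\ stabilizes_Cinf G) <-> GE2 G.
Proof.
split; first by case; apply: stabilizes_GE2.
by move=> GE; split; [exact: GE2_GL2|exact: GE2_stabilizes].
Qed.
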